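(* For every $n\ge 2$, none of the unimodal spi-logics $\mathsf{SPi}+\{\iota^n_{fun}\}$, $\mathsf{SPi}+\{\iota_{refl},\iota^n_{fun}\}$, $\mathsf{SPi}+\{\iota_{trans},\iota^n_{fun}\}$, $\mathsf{SPi}+(\Sigma_{qo}\cup\{\iota^n_{fun}\})$ and $\mathsf{SPi}+(\Sigma_{equiv}\cup\{\iota^n_{fun}\})$ is complex.
   Context: Unimodal setting: one diamond $\Diamond$. Sp-formulas: built from propositional variables and $\top$ by $\wedge$ and $\Diamond$; sp-implications $\sigma\to\tau$. A SLO is an algebra $(A,\wedge,\top,\Diamond)$ with $(A,\wedge,\top)$ a meet-semilattice with top and $\Diamond$ monotone; it validates $\sigma\to\tau$ if $\sigma[\mathfrak a]\le\tau[\mathfrak a]$ for all valuations. Frames $(W,R)$ with standard Kripke semantics. For a set $\Sigma$, $\mathsf{SPi}+\Sigma$ is the set of sp-implications valid in all SLOs validating $\Sigma$ (a spi-logic). For a frame $\mathfrak F=(W,R)$, $\mathfrak F^\star=(2^W,\cap,W,\Diamond^+)$ with $\Diamond^+X=\{w\mid\exists v\in X,(w,v)\in R\}$. A spi-logic $L$ is complex if every SLO validating $L$ embeds (injectively, preserving $\wedge,\top,\Diamond$) into $\mathfrak F^\star$ for some frame $\mathfrak F$ validating $L$. Notation: $\iota_{refl}=(p\to\Diamond p)$, $\iota_{trans}=(\Diamond\Diamond p\to\Diamond p)$, $\iota_{sym}=(q\wedge\Diamond p\to\Diamond(p\wedge\Diamond q))$, $\Sigma_{qo}=\{\iota_{refl},\iota_{trans}\}$,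 $\Sigma_{equiv}=\{\iota_{refl},\iota_{trans},\iota_{sym}\}$, and for $P=\{p_0,\dots,p_n\}$, $\iota^n_{fun}=\big(\bigwedge_{Q\subseteq P,|Q|=n}\Diamond\bigwedge Q\to\Diamond\bigwedge P\big)$ (its frames are those where every point has at most $n$ successors). *)

From mathcomp Require Import all_boot.
Set Implicit Arguments. Unset Strict Implicit. Unset Printing Implicit Defensive.

Inductive fml : Type :=
| Var : nat -> fml
| Top : fml
| And : fml -> fml -> fml
| Dia : fml -> fml.

Definition spi := (fml * fml)%type.

Fixpoint bigand (l : seq fml) : fml :=
  match l with
  | [::] => Top
  | [:: x] => x
  | x :: l' => And x (bigand l')
  end.

Record SLO : Type := {
  car :> Type;
  meet : car -> car -> car;
  top : car;
  dia : car -> car;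
  meetA : forall x y z, meet x (meet y z) = meet (meet x y) z;
  meetC : forall x y, meet x y = meet y x;
  meetxx : forall x, meet x x = x;
  meetT : forall x, meet x top = x;
  dia_mono : forall x y, meet x y = x -> meet (dia x) (dia y) = dia x
}.

Definition sle (A : SLO) (x y : A) : Prop := meet x y = x.

Fixpoint eval (A : SLO) (v : nat -> A) (f : fml) : A :=
  match f with
  | Var i => v i
  | Top => top A
  | And f1 f2 => meet (eval v f1) (eval v f2)
  | Dia f1 => dia (eval v f1)
  end.

Definition slo_valid (A : SLO) (i : spi) : Prop :=
  forall v : nat -> A, sle (eval v i.1) (eval v i.2).

Definition SPi_plus (Sigma : spi -> Prop) : spi -> Prop :=
  fun i => forall A : SLO, (forall s, Sigma s -> slo_valid A s) -> slo_valid A i.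

Definition slo_validates_logic (A : SLO) (L : spi -> Prop) : Prop :=
  forall i, L i -> slo_valid A i.

Fixpoint sat (W : Type) (R : W -> W -> Prop) (V : nat -> W -> Prop) (w : W) (f : fml) : Prop :=
  match f with
  | Var i => V i w
  | Top => True
  | And f1 f2 => sat R V w f1 /\ sat R V w f2
  | Dia f1 => exists u, R w u /\ sat R V u f1
  end.

Definition frame_valid (W : Type) (R : W -> W -> Prop) (i : spi) : Prop :=
  forall (V : nat -> W -> Prop) (w : W), sat R V w i.1 -> sat R V w i.2.

Definition frame_validates_logic (W : Type) (R : W -> W -> Prop) (L : spi -> Prop) : Prop :=
  forall i, L i -> frame_valid R i.

(** Embedding of an SLO into the complex algebra F^* = (2^W, cap, W, Dia^+),
    subsets of W being predicates compared extensionally. *)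
Definition embeds_into_complex (A : SLO) (W : Type) (R : W -> W -> Prop) : Prop :=
  exists h : A -> (W -> Prop),
    (forall a b : A, (forall w, h a w <-> h b w) -> a = b) /\
    (forall a b : A, forall w, h (meet a b) w <-> (h a w /\ h b w)) /\
    (forall w, h (top A) w <-> True) /\
    (forall a : A, forall w, h (dia a) w <-> exists u, R w u /\ h a u).

Definition complex (L : spi -> Prop) : Prop :=
  forall A : SLO, slo_validates_logic A L ->
    exists (W : Type) (R : W -> W -> Prop),
      frame_validates_logic R L /\ embeds_into_complex A R.

(** The sp-implications of the paper. p = Var 0, q = Var 1. *)
Definition iota_refl : spi := (Var 0, Dia (Var 0)).
Definition iota_trans : spi := (Dia (Dia (Var 0)), Dia (Var 0)).
Definition iota_sym : spi :=
  (And (Var 1) (Dia (Var 0)), Dia (And (Var 0) (Dia (Var 1)))).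

(** iota^n_fun with P = {p_0,...,p_n} (p_i = Var i):
    /\_{Q subset P, |Q| = n} <> /\Q  ->  <> /\P *)
Definition conj_of (n : nat) (Q : {set 'I_n.+1}) : fml :=
  bigand [seq Var (nat_of_ord i) | i <- enum Q].

Definition iota_fun (n : nat) : spi :=
  (bigand [seq Dia (conj_of Q) | Q <- enum [pred Q : {set 'I_n.+1} | #|Q| == n]],
   Dia (conj_of [set: 'I_n.+1])).

Fixpoint has_mem (i : spi) (l : seq spi) : Prop :=
  match l with [::] => False | x :: l' => x = i \/ has_mem i l' end.
Definition setof (l : seq spi) : spi -> Prop := fun i => has_mem i l.

From mathcomp Require Import all_boot.

Set Implicit Arguments.
Unset Strict Implicit.
Unset Printing Implicit Defensive.

(* Take the flat semilattice on n+1 pairwise incompatible atoms a_0, ..., a_n, with bottom and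
   top, and with <>x = top for every x <> bottom. It validates iota_refl, iota_trans, iota_sym,
   and, as n >= 2, also iota^n_fun: if p_0 /\ ... /\ p_n is bottom then two of the p_i already
   meet to bottom, and some n of the p_i include both. But it embeds, via h, into no F^* with F a
   frame of iota^n_fun: each point sees every h(a_k), so iota^n_fun provides a successor lying in
   two distinct h(a_j), i.e. in h(bottom). Hence h(bottom) = h(<>bottom) is all of F, like
   h(top). *)

Section SLOBigMeet.

Variable A : SLO.

Lemma eval_bigand (v : nat -> A) (l : seq fml) :
  eval v (bigand l) = \big[@meet A/top A]_(f <- l) eval v f.
Proof.
elim: l => [|f [|g l] IH]; first by rewrite big_nil.
  by rewrite big_cons big_nil /= meetT.
by rewrite big_cons -IH.
Qed.

Lemma sle_meet (e x y : A) : sle e x -> sle e y -> sle e (meet x y).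
Proof. by rewrite /sle => ex ey; rewrite meetA ex ey. Qed.

Lemma sle_big_meet_mem (I : eqType) (s : seq I) (a : I -> A) i :
  i \in s -> sle (\big[@meet A/top A]_(j <- s) a j) (a i).
Proof.
rewrite /sle; elim: s => [|j s IH] //; rewrite inE big_cons => /orP[/eqP <-|/IH si].
  by rewrite -meetA [meet _ (a i)]meetC meetA meetxx.
by rewrite -meetA si.
Qed.

End SLOBigMeet.

Lemma sat_bigand {W : Type} {R : W -> W -> Prop} {V w} {I : eqType} (F : I -> fml) s :
  sat R V w (bigand [seq F i | i <- s]) <-> (forall i, i \in s -> sat R V w (F i)).
Proof.
have sat_cons f l : sat R V w (bigand (f :: l)) <-> sat R V w f /\ sat R V w (bigand l).
  by case: l => //=; tauto.
elim: s => [|j s IH] /=; first by [].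
split=> [/sat_cons[Fj /IH Fs] i|Fs].
  by rewrite inE => /orP[/eqP ->|/Fs].
apply/sat_cons; split; first by apply: Fs; rewrite inE eqxx.
by apply/IH => i si; apply: Fs; rewrite inE si orbT.
Qed.

(* Interpret p_i as the union of the X k with k <> i: every n-set of variables misses some k. *)
Lemma iota_fun_shared_successor (n : nat) (W : Type) (R : W -> W -> Prop)
    (X : 'I_n.+1 -> W -> Prop) (w : W) :
  frame_valid R (iota_fun n) -> (forall k, exists2 u, R w u & X k u) ->
  exists2 x, R w x & exists j1 j2, [/\ j1 != j2, X j1 x & X j2 x].
Proof.
move=> Rfun succ.
pose V i x := exists2 k : 'I_n.+1, val k != i & X k x.
have [x [Rwx allV]] : exists x, R w x /\ sat R V x (conj_of [set: 'I_n.+1]).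
  apply: (Rfun V w); apply/(sat_bigand (fun Q => Dia (conj_of Q))) => Q.
  rewrite mem_enum inE => /eqP cardQ.
  have [k kQ] : exists k, k \in ~: Q.
    by apply/card_gt0P; rewrite cardsCs setCK card_ord cardQ subSnn.
  have [u Rwu Xku] := succ k.
  exists u; split=> //; apply/(sat_bigand (fun i : 'I_n.+1 => Var i)) => i.
  rewrite mem_enum => iQ; exists k => //.
  by apply: contraTneq kQ => /val_inj ->; rewrite inE iQ.
have {}allV (i : 'I_n.+1) : sat R V x (Var i).
  by apply: (proj1 (sat_bigand (fun i : 'I_n.+1 => Var i) _) allV); rewrite mem_enum inE.
have [j1 _ X1] := allV ord0.
have [j2 j21 X2] := allV j1.
by exists x => //; exists j1, j2; split=> //; apply: contraNneq j21 => ->.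
Qed.

Section FlatSLO.

Variable T : eqType.

Inductive flat : Type := fbot | fatom of T | ftop.

Definition flat_meet (x y : flat) : flat :=
  match x, y with
  | fbot, _ | _, fbot => fbot
  | ftop, z | z, ftop => z
  | fatom a, fatom b => if a == b then fatom a else fbot
  end.

Definition flat_dia (x : flat) : flat := if x is fbot then fbot else ftop.

Lemma flat_meetA x y z : flat_meet x (flat_meet y z) = flat_meet (flat_meet x y) z.
Proof.
case: x y z => [|a|] [|b|] [|c|] //=; do ?[case: eqP => [?|] //=; subst]; rewrite ?eqxx.
Qed.

Lemma flat_meetC x y : flat_meet x y = flat_meet y x.
Proof. by case: x y => [|a|] [|b|] //=; rewrite eq_sym; case: eqP => // ->. Qed.

Lemma flat_meetxx x : flat_meet x x = x.
Proof. by case: x => //= a; rewrite eqxx. Qed.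

Lemma flat_meetT x : flat_meet x ftop = x.
Proof. by case: x. Qed.

Lemma flat_dia_mono x y : flat_meet x y = x -> flat_meet (flat_dia x) (flat_dia y) = flat_dia x.
Proof. by case: x y => [|a|] [|b|]. Qed.

Definition flatSLO : SLO := Build_SLO flat_meetA flat_meetC flat_meetxx flat_meetT flat_dia_mono.

Lemma flat_valid_refl : slo_valid flatSLO iota_refl.
Proof. by move=> v; rewrite /sle /=; case: (v 0) => //= a; rewrite eqxx. Qed.

Lemma flat_valid_trans : slo_valid flatSLO iota_trans.
Proof. by move=> v; rewrite /sle /=; case: (v 0). Qed.

Lemma flat_valid_sym : slo_valid flatSLO iota_sym.
Proof.
by move=> v; rewrite /sle /=; case: (v 0) => [|a|]; case: (v 1) => [|b|] //=; rewrite eqxx.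
Qed.

Section BigMeet.

Variables (I : eqType) (x : I -> flatSLO).

Notation big_meet s := (\big[@meet flatSLO/top flatSLO]_(i <- s) x i).

Lemma flat_big_meet_atom s b : big_meet s = fatom b -> exists2 j, j \in s & x j = fatom b.
Proof.
elim: s => [|i s IH]; rewrite ?big_nil ?big_cons //=.
case xi: (x i) => [|a|]; case bs: (big_meet s) => [|c|] //=.
- by case: eqP => // _ [<-]; exists i; rewrite ?inE ?eqxx.
- by case=> <-; exists i; rewrite ?inE ?eqxx.
- by move=> cb; have [j js xj] := IH (etrans bs cb); exists j; rewrite // inE js orbT.
Qed.

Lemma flat_big_meet_bot s :
  big_meet s = fbot -> exists i j, [/\ i \in s, j \in s & flat_meet (x i) (x j) = fbot].
Proof.
elim: s => [|i s IH]; rewrite ?big_nil ?big_cons //=.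
have self_bot : x i = fbot ->
    exists i' j, [/\ i' \in i :: s, j \in i :: s & flat_meet (x i') (x j) = fbot].
  by move=> xi; exists i, i; rewrite inE eqxx xi.
case bs: (big_meet s) => [|c|] /=.
- move=> _; have [i' [j [i's js xij]]] := IH bs.
  by exists i', j; rewrite !inE i's js !orbT.
- case xi: (x i) => [|a|] /=; [by move=> _; apply: self_bot | case: eqP => // ac _ | by []].
  have [j js xj] := flat_big_meet_atom bs.
  by exists i, j; rewrite !inE eqxx js orbT xi xj /=; case: eqP.
- by rewrite flat_meetT => /self_bot.
Qed.

End BigMeet.

Lemma flat_valid_fun n : 2 <= n -> slo_valid flatSLO (iota_fun n).
Proof.
move=> n_ge2 v; rewrite /sle /=.
case all_v: (eval v (conj_of [set: 'I_n.+1])) => [|a|] /=; try exact: flat_meetT.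
rewrite eval_bigand big_map in all_v.
have [i [j [_ _ vij]]] := flat_big_meet_bot all_v.
have [k kij] : exists k : 'I_n.+1, k \in ~: [set i; j].
  apply/card_gt0P; rewrite cardsCs setCK card_ord subn_gt0 ltnS.
  by rewrite cards2 (leq_trans _ n_ge2) // ltnS leq_b1.
rewrite !inE negb_or in kij; case/andP: kij => ki kj.
pose Q := [set~ k].
have Q_bot : eval v (conj_of Q) = fbot.
  have Q_below : sle (eval v (conj_of Q)) (flat_meet (v i) (v j)).
    by apply: sle_meet; rewrite eval_bigand big_map;
      apply: (sle_big_meet_mem (fun i : 'I_n.+1 => eval v (Var i))); rewrite mem_enum !inE eq_sym.
  by move: Q_below; rewrite vij /sle; case: (eval v _).
have : sle (eval v (iota_fun n).1) (eval v (Dia (conj_of Q))).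
  rewrite eval_bigand big_map; apply: (sle_big_meet_mem (fun Q => eval v (Dia (conj_of Q)))).
  by rewrite mem_enum inE cardsC1 card_ord.
by rewrite /= Q_bot.
Qed.

End FlatSLO.

Arguments fbot {T}.
Arguments ftop {T}.

Lemma flat_not_embeds n (W : Type) (R : W -> W -> Prop) :
  frame_valid R (iota_fun n) -> ~ embeds_into_complex (flatSLO 'I_n.+1) R.
Proof.
move=> Rfun [h [h_inj [h_meet [h_top h_dia]]]].
suff h_bot w : h fbot w.
  suff : fbot = ftop :> flatSLO 'I_n.+1 by [].
  by apply: h_inj => w; split=> _; [exact/h_top | exact: h_bot].
have succ k : exists2 u, R w u & h (fatom k) u.
  by have [u []] := proj1 (h_dia (fatom k) w) (proj2 (h_top w) I); exists u.
have [x Rwx [j1 [j2 [j12 X1 X2]]]] := iota_fun_shared_successor Rfun succ.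
apply/(h_dia fbot w); exists x; split=> //.
by have := proj2 (h_meet (fatom j1) (fatom j2) x) (conj X1 X2); rewrite /= (negbTE j12).
Qed.

Lemma flat_not_complex n (Sigma : spi -> Prop) :
  Sigma (iota_fun n) -> (forall s, Sigma s -> slo_valid (flatSLO 'I_n.+1) s) ->
  ~ complex (SPi_plus Sigma).
Proof.
move=> Sigma_fun Sigma_valid L_complex.
have [W [R [RL]]] := L_complex _ (fun i Li => Li _ Sigma_valid).
by apply: flat_not_embeds; apply: RL => A; apply.
Qed.

Theorem theorem7p2 (n : nat) (hn : 2 <= n) :
  ~ complex (SPi_plus (setof [:: iota_fun n])) /\
  ~ complex (SPi_plus (setof [:: iota_refl; iota_fun n])) /\
  ~ complex (SPi_plus (setof [:: iota_trans; iota_fun n])) /\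
  ~ complex (SPi_plus (setof [:: iota_refl; iota_trans; iota_fun n])) /\
  ~ complex (SPi_plus (setof [:: iota_refl; iota_trans; iota_sym; iota_fun n])).
Proof.
have valid s : has_mem s [:: iota_refl; iota_trans; iota_sym; iota_fun n] ->
    slo_valid (flatSLO 'I_n.+1) s.
  case=> [<-|[<-|[<-|[<-|[]]]]].
  - exact: flat_valid_refl.
  - exact: flat_valid_trans.
  - exact: flat_valid_sym.
  - exact: flat_valid_fun.
by do 4?split; apply: flat_not_complex => [|s s_in]; try apply: valid; cbn in *; tauto.
Qed.
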